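(* Let $G$ be a graph on vertex set $V=\{1,\ldots,N\}$ and $G_l$ a graph on $V$ with $E(G)\subseteq E(G_l)$. Suppose a path $P$ is an induced subgraph of $G$, with vertices $p_1,\ldots,p_n$ labelled in path order, such that $E(P^d)\subseteq E(G_l)$ for some positive integer $d$. If for each $i=1,\ldots,n-d-1$ the pair $\{p_i,p_{i+d}\}$ is focused on $V(P)$ with respect to $G$ and $G_l$, then the forces $\{p_i,p_{i+d}\}\rightarrow\{p_i,p_{i+d+1}\}$, $i=1,\ldots,n-d-1$, may be applied sequentially, and the resulting graph is \[G_{l_1}=G_l+\{\{p_i,p_{i+d+1}\}: 1\le i\le n-d-1\}.\] In particular, for every $A\in\mathcal{S}(G)$ and every $X\in\overline{\mathcal{S}_0}(G_l^c)$ with $AX-XA=0$, one has $X\in\overline{\mathcal{S}_0}(G_{l_1}^c)$.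
   Context: All graphs are finite, simple, undirected. For a graph $G$ on $\{1,\ldots,N\}$, $\mathcal{S}(G)$ is the set of real symmetric $N\times N$ matrices $A=(a_{ij})$ with $a_{ij}\neq0$ iff $\{i,j\}\in E(G)$ for $i\neq j$ (diagonal arbitrary). For a graph $H$ on $\{1,\ldots,N\}$, $\overline{\mathcal{S}_0}(H)$ is the set of real symmetric matrices whose $(i,j)$ entry is zero whenever $i=j$ or $\{i,j\}\notin E(H)$. $H^c$ is the complement of $H$. $P^d$ is the $d$-th power of $P$: the graph on $V(P)$ in which two vertices are adjacent iff their distance in $P$ is at most $d$. $N_G[v]$ is the closed neighbourhood of $v$, and $N_G[v]^c$ its complement in the vertex set. For nonempty $U\subseteq V$ and a graph $G'\supseteq G$ on $V$, a pair $\{i,j\}$ is focused on $U$ with respect to $G$ and $G'$ if $N_G[i]\cap N_{G'}[j]^c\subseteq U$ and $N_G[j]\cap N_{G'}[i]^c\subseteq U$. A force $\{i,j\}\rightarrow\{j,k\}$ with respect to $G$ and a current graph $G'\supseteq G$ on $V$ is valid when $i,j,k$ are pairwise distinct, $k\in N_G[i]$, and $\{i,j\}$ is focused on $\{k\}$ with respect to $G$ and $G'$; applying it replaces $G'$ by $G'+\{j,k\}$. (Known fact used to interpret forces: if $A\in\mathcal{S}(G)$, $X\in\overline{\mathcal{S}_0}(G'^c)$, $AX=XA$ and the force is valid, then $X\in\overline{\mathcal{S}_0}((G'+\{j,k\})^c)$.) *)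

(* Vertices {1..N} are represented by 'I_N (0-based). *)
From mathcomp Require Import all_boot all_order all_algebra.
Set Implicit Arguments. Unset Strict Implicit. Unset Printing Implicit Defensive.
Import Order.TTheory GRing.Theory Num.Theory.
Local Open Scope ring_scope.

Definition is_graph N (g : rel 'I_N) : Prop := symmetric g /\ irreflexive g.

Definition subgraph N (g g' : rel 'I_N) : Prop := forall x y, g x y -> g' x y.

Definition compl_graph N (g : rel 'I_N) : rel 'I_N :=
  fun x y => (x != y) && ~~ g x y.

Definition add_edge N (g : rel 'I_N) (a b : 'I_N) : rel 'I_N :=
  fun x y => [|| g x y, (x == a) && (y == b) | (x == b) && (y == a)].

Definition cnbhd N (g : rel 'I_N) (v : 'I_N) : {set 'I_N} :=
  [set u | (u == v) || g v u].

Definition focused N (G G' : rel 'I_N) (i j : 'I_N) (U : {set 'I_N}) : bool :=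
  ((cnbhd G i :&: ~: cnbhd G' j) \subset U) &&
  ((cnbhd G j :&: ~: cnbhd G' i) \subset U).

(* The force {i,j} -> {j,k} is valid w.r.t. G and current graph G' *)
Definition valid_force N (G G' : rel 'I_N) (i j k : 'I_N) : bool :=
  [&& i != j, j != k, i != k, k \in cnbhd G i & focused G G' i j [set k]].

Definition in_S (R : realFieldType) N (G : rel 'I_N) (A : 'M[R]_N) : Prop :=
  A^T = A /\ forall i j, i != j -> (A i j != 0) = G i j.

(* closure of S_0(H): symmetric, zero on the diagonal and on non-edges of H *)
Definition in_S0bar (R : realFieldType) N (H : rel 'I_N) (X : 'M[R]_N) : Prop :=
  X^T = X /\ forall i j, (i == j) || ~~ H i j -> X i j = 0.

(* p : nat -> 'I_N, with p 0, ..., p (n-1) the vertices of an induced path of G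
   listed in path order *)
Definition induced_path N (G : rel 'I_N) (n : nat) (p : nat -> 'I_N) : Prop :=
  (forall a b, a < n -> b < n -> p a = p b -> a = b)%N /\
  (forall a b, a < n -> b < n -> G (p a) (p b) = (a == b.+1) || (b == a.+1))%N.

Definition path_vertices N (n : nat) (p : nat -> 'I_N) : {set 'I_N} :=
  [set x | [exists a : 'I_n, x == p a]].

Definition pathpow_sub N (n d : nat) (p : nat -> 'I_N) (g : rel 'I_N) : Prop :=
  (forall a b, a < n -> b < n -> a != b -> `|a - b|%N <= d -> g (p a) (p b))%N.

(* Graph after applying the first m forces (0-based index i <-> paper i+1):
   G^(0) = Gl, G^(m+1) = G^(m) + {p m, p (m+d+1)} *)
Fixpoint force_seq N (Gl : rel 'I_N) (p : nat -> 'I_N) (d m : nat) : rel 'I_N :=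
  match m with
  | 0 => Gl
  | m'.+1 => add_edge (force_seq Gl p d m') (p m') (p (m' + d + 1)%N)
  end.

(* G_{l_1} = Gl + {{p_i, p_{i+d+1}} : 1 <= i <= n-d-1} (0-based here) *)
Definition Gl1 N (Gl : rel 'I_N) (n d : nat) (p : nat -> 'I_N) : rel 'I_N :=
  fun x y => Gl x y ||
    [exists i : 'I_n, ((i + d + 1 < n)%N) &&
       (((x == p i) && (y == p (i + d + 1)%N)) ||
        ((x == p (i + d + 1)%N) && (y == p i)))].

(* The i-th force {p_(i+d), p_i} -> {p_i, p_(i+d+1)} is checked against the
   graph G^(i) obtained from Gl by the first i forces.  Since G^(i) contains
   Gl, focusing of {p_i, p_(i+d)} on V(P) confines the relevant vertices to
   the path, and as P is induced they lie among p_(i-1), p_i, p_(i+1) and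
   p_(i+d-1), p_(i+d), p_(i+d+1).  All of them except p_(i+d+1) are already
   joined to the opposite end of the pair: in P^d, or, for
   {p_(i-1), p_(i+d)}, by the previous force.  Hence each force is valid, and
   the known fact about valid forces propagates the zero pattern of X. *)

From mathcomp Require Import all_boot all_order all_algebra.
From mathcomp Require Import zify.
Import Order.TTheory GRing.Theory Num.Theory.

Lemma cnbhd_sub {N} {g g' : rel 'I_N} v :
  subgraph g g' -> cnbhd g v \subset cnbhd g' v.
Proof.
by move=> sub; apply/subsetP => u; rewrite !inE => /orP[->|/sub ->]; rewrite ?orbT.
Qed.

Lemma focused_sub {N} {G G' G'' : rel 'I_N} {i j U} :
  subgraph G' G'' -> focused G G' i j U -> focused G G'' i j U.
Proof.
move=> sub /andP[foc_ij foc_ji].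
by apply/andP; split; [apply: subset_trans foc_ij | apply: subset_trans foc_ji];
  rewrite setIS // setCS cnbhd_sub.
Qed.

Section ForceSequence.
Context {N : nat} {G Gl : rel 'I_N} {n d : nat} {p : nat -> 'I_N}.

Lemma Gl_sub_force_seq m : subgraph Gl (force_seq Gl p d m).
Proof. by move=> x y g; elim: m => //= m IH; rewrite /add_edge IH. Qed.

Lemma force_seq_has m x y : force_seq Gl p d m x y = Gl x y ||
  has (fun i => ((x == p i) && (y == p (i + d + 1))) ||
                ((x == p (i + d + 1)) && (y == p i))) (iota 0 m).
Proof.
elim: m => [|m IH]; first by rewrite /= orbF.
by rewrite -[in iota _ _]addn1 iotaD /= /add_edge IH has_cat /= orbF !orbA.
Qed.

Lemma force_seq_Gl1 x y : force_seq Gl p d (n - d - 1) x y = Gl1 Gl n d p x y.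
Proof.
rewrite force_seq_has /Gl1; congr (_ || _); apply/hasP/existsP.
  move=> [i]; rewrite mem_iota add0n => /andP[_ hi] h.
  have hin : i < n by lia.
  by exists (Ordinal hin); rewrite /= h andbT; lia.
move=> [i /andP[hi h]]; exists (nat_of_ord i) => //.
rewrite mem_iota add0n; lia.
Qed.

Hypotheses (Hpath : induced_path G n p) (Hpow : pathpow_sub n d p Gl).

Lemma path_index_eq a b : a < n -> b < n -> (p a == p b) = (a == b).
Proof. by move=> an bn; apply/eqP/eqP => [|->//]; case: Hpath => inj _; exact: inj. Qed.

Lemma path_cnbhd {x u} : x < n ->
  u \in cnbhd G (p x) -> u \in path_vertices n p ->
  exists2 a, (a < n) && [|| a == x, x == a.+1 | a == x.+1] & u = p a.
Proof.
move=> xn + /[!inE] /existsP[a /eqP ua]; rewrite ua inE; have [_ Gp] := Hpath.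
by rewrite path_index_eq // Gp // => adj; exists a => //; rewrite ltn_ord.
Qed.

Lemma force_seq_path_edge m a b : a < n -> b < n -> a != b ->
  [|| `|a - b| <= d, (a + d + 1 == b) && (a < m) | (b + d + 1 == a) && (b < m)] ->
  force_seq Gl p d m (p a) (p b).
Proof.
move=> an bn ab /or3P[near|/andP[/eqP <- am]|/andP[/eqP <- bm]].
- exact/Gl_sub_force_seq/Hpow.
- rewrite force_seq_has; apply/orP; right; apply/hasP; exists a.
    by rewrite mem_iota.
  by rewrite !eqxx.
- rewrite force_seq_has; apply/orP; right; apply/hasP; exists b.
    by rewrite mem_iota.
  by rewrite !eqxx orbT.
Qed.

Lemma path_focus_index {m x y u} : x < n -> y < n ->
  u \in cnbhd G (p x) :&: ~: cnbhd (force_seq Gl p d m) (p y) ->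
  u \in path_vertices n p ->
  exists2 a, [&& a < n, [|| a == x, x == a.+1 | a == x.+1], a != y &
    ~~ [|| `|y - a| <= d, (y + d + 1 == a) && (y < m) | (a + d + 1 == y) && (a < m)]]
  & u = p a.
Proof.
move=> xn yn /setIP[ux]; rewrite in_setC inE negb_or => /andP[uy no_edge] uV.
have [a /andP[an adj] ua] := path_cnbhd xn ux uV; exists a => //.
have ay : a != y by rewrite -path_index_eq // -ua.
rewrite an adj ay /=; apply: contra no_edge => cond.
by rewrite ua; apply: force_seq_path_edge; rewrite // eq_sym.
Qed.

Hypotheses (d_gt0 : 0 < d)
  (Hfoc : forall i, i + d + 1 < n -> focused G Gl (p i) (p (i + d)) (path_vertices n p)).

Lemma valid_force_path i : i + d + 1 < n ->
  valid_force G (force_seq Gl p d i) (p (i + d)) (p i) (p (i + d + 1)).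
Proof.
move=> hi; have [_ Gp] := Hpath.
have hin : i < n by lia.
have hidn : i + d < n by lia.
have /andP[foc1 foc2] := focused_sub (Gl_sub_force_seq i) (Hfoc i hi).
apply/and5P; split; try by rewrite ?inE path_index_eq ?Gp; lia.
apply/andP; split; apply/subsetP => u u_in.
- have [a ha ->] := path_focus_index hidn hin u_in (subsetP foc2 u u_in).
  by rewrite inE; apply/eqP; congr p; lia.
- have [a ha ->] := path_focus_index hin hidn u_in (subsetP foc1 u u_in).
  by rewrite inE; apply/eqP; congr p; lia.
Qed.

End ForceSequence.

Local Open Scope ring_scope.

Section ValidForce.
Context {R : realFieldType} {N : nat} {G G' : rel 'I_N} {A X : 'M[R]_N}.
Hypotheses (HA : in_S G A) (HX : in_S0bar (compl_graph G') X).

Lemma S_entry_cnbhd {u v} : A u v != 0 -> v \in cnbhd G u.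
Proof.
case: HA => _ AG Auv; rewrite inE; have [->|vu] := eqVneq v u; first by [].
by rewrite -AG // eq_sym.
Qed.

Lemma S0bar_entry_cnbhd {u v} : X u v != 0 -> u \notin cnbhd G' v.
Proof.
case: HX => XT XG; rewrite inE; apply: contra => /orP[/eqP ->|g].
  by rewrite XG ?eqxx.
by rewrite -XT mxE XG // /compl_graph g andbF orbT.
Qed.

Lemma mulmx_entry_focused {i j k} :
  cnbhd G j :&: ~: cnbhd G' i \subset [set k] -> (A *m X) j i = A j k * X k i.
Proof.
move=> foc; rewrite mxE (bigD1 k) //= big1 ?addr0 // => u uk.
apply/eqP; apply: contraNT uk; rewrite mulf_eq0 negb_or => /andP[Aju Xui].
have : u \in cnbhd G j :&: ~: cnbhd G' i.
  by rewrite inE (S_entry_cnbhd Aju) inE (S0bar_entry_cnbhd Xui).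
by move/(subsetP foc); rewrite inE.
Qed.

Lemma mulmx_entryC i j : (X *m A) i j = (A *m X) j i.
Proof.
case: HA HX => AT _ [XT _].
by rewrite -[in RHS]AT -[in RHS]XT -trmx_mul [RHS]mxE.
Qed.

Lemma S0bar_add_edge j k :
  X j k = 0 -> in_S0bar (compl_graph (add_edge G' j k)) X.
Proof.
case: HX => XT XG Xjk; split => // u v.
rewrite /compl_graph /add_edge negb_and !negbK orbA orbb.
case/or4P=> [uv|g|/andP[/eqP-> /eqP->]|/andP[/eqP-> /eqP->]] //.
- by apply: XG; rewrite uv.
- by apply: XG; rewrite /compl_graph g andbF orbT.
- by rewrite -XT mxE.
Qed.

(* Focusing on {k} collapses both (A X)_ji and (A X)_ij = (X A)_ji to their
   k-th terms, so commutation gives A_ik X_kj = A_jk X_ki = 0. *)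
Theorem valid_force_S0bar {i j k} :
  subgraph G G' -> A *m X = X *m A -> valid_force G G' i j k ->
  in_S0bar (compl_graph (add_edge G' j k)) X.
Proof.
move=> sub comm /and5P[_ _ nik kin /andP[foc_ij foc_ji]].
apply: S0bar_add_edge; case: HA HX => _ AG [XT _].
have Xki : X k i = 0.
  apply/eqP; apply: contraTT (subsetP (cnbhd_sub i sub) k kin).
  exact: S0bar_entry_cnbhd.
have Aik : A i k != 0.
  by move: kin; rewrite inE eq_sym (negPf nik) -AG.
have : A i k * X k j = 0.
  by rewrite -(mulmx_entry_focused foc_ij) -mulmx_entryC -comm
             (mulmx_entry_focused foc_ji) Xki mulr0.
have := congr1 (fun M : 'M[R]_N => M k j) XT; rewrite mxE => ->.
by move/eqP; rewrite mulf_eq0 (negPf Aik) => /eqP.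
Qed.

End ValidForce.

Theorem corollary3p6 (R : realFieldType) (N : nat) (G Gl : rel 'I_N)
  (n d : nat) (p : nat -> 'I_N) :
  is_graph G -> is_graph Gl -> subgraph G Gl ->
  induced_path G n p ->
  (0 < d)%N ->
  pathpow_sub n d p Gl ->
  (forall i : nat, (i + d + 1 < n)%N ->
     focused G Gl (p i) (p (i + d)%N) (path_vertices n p)) ->
  [/\ (forall i : nat, (i + d + 1 < n)%N ->
         valid_force G (force_seq Gl p d i) (p (i + d)%N) (p i) (p (i + d + 1)%N)),
      (forall x y, force_seq Gl p d (n - d - 1)%N x y = Gl1 Gl n d p x y) &
      (forall A X : 'M[R]_N, in_S G A -> in_S0bar (compl_graph Gl) X ->
         A *m X - X *m A = 0 -> in_S0bar (compl_graph (Gl1 Gl n d p)) X)].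
Proof.
move=> _ _ sub Hpath d_gt0 Hpow Hfoc.
have valid := valid_force_path Hpath Hpow d_gt0 Hfoc.
split=> [//|x y|A X HA HX /subr0_eq comm]; first exact: force_seq_Gl1.
have HXm m : (m <= n - d - 1)%N -> in_S0bar (compl_graph (force_seq Gl p d m)) X.
  elim: m => [//|m IH lt_m]; apply: (valid_force_S0bar HA (IH (ltnW lt_m))) comm _.
    by move=> x y /sub /Gl_sub_force_seq.
  by apply: valid; lia.
have [XT XG] := HXm _ (leqnn _).
by split=> // u v; rewrite /compl_graph -force_seq_Gl1; exact: XG.
Qed.
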